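(* For a semigroup $S$ the following are equivalent: (i) $S$ is regular; (ii) $\underline{B}\cap\underline{A}=\underline{B}\circ\underline{A}$ for every IF left ideal $A=(\mu_A,\nu_A)$ and every IF right ideal $B=(\mu_B,\nu_B)$ of $S$.
   Context: A semigroup $S$ is regular if for every $a\in S$ there is $x\in S$ with $a=axa$. An intuitionistic fuzzy (IF) subset of $S$ is a pair $A=(\mu_A,\nu_A)$ of functions $S\to[0,1]$ with $\mu_A(x)+\nu_A(x)\le1$ for all $x$. $A$ is an IF right (resp. left) ideal of $S$ if $\mu_A(xy)\ge\mu_A(x)$ and $\nu_A(xy)\le\nu_A(x)$ (resp. $\mu_A(xy)\ge\mu_A(y)$ and $\nu_A(xy)\le\nu_A(y)$) for all $x,y\in S$. For $x\in S$ and $\alpha,\beta\in[0,1]$ with $\alpha+\beta\le1$, the IF point $x_{(\alpha,\beta)}$ is the IF subset of $S$ with value $(\alpha,\beta)$ at $x$ and $(0,1)$ elsewhere (so all points $x_{(0,1)}$ coincide). $\underline{S}$ is the set of all IF points of $S$; it is a semigroup under $x_{(\alpha,\beta)}\circ y_{(\gamma,\delta)}=(xy)_{(\min(\alpha,\gamma),\max(\beta,\delta))}$. For an IF subset $A$, $\underline{A}=\{x_{(\alpha,\beta)}\in\underline{S}:\mu_A(x)\ge\alpha,\ \nu_A(x)\le\beta\}$. For subsets $X,Y\subseteq\underline{S}$, $X\circ Y=\{p\circ q:p\in X,q\in Y\}$. *)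

From Stdlib Require Import Reals ClassicalEpsilon FunctionalExtensionality.
Open Scope R_scope.

Definition IFset (S : Type) : Type := ((S -> R) * (S -> R))%type.

Definition is_IFsubset {S : Type} (A : IFset S) : Prop :=
  forall x, 0 <= fst A x <= 1 /\ 0 <= snd A x <= 1 /\ fst A x + snd A x <= 1.

Definition IF_right_ideal {S : Type} (mul : S -> S -> S) (A : IFset S) : Prop :=
  forall x y, fst A (mul x y) >= fst A x /\ snd A (mul x y) <= snd A x.

Definition IF_left_ideal {S : Type} (mul : S -> S -> S) (A : IFset S) : Prop :=
  forall x y, fst A (mul x y) >= fst A y /\ snd A (mul x y) <= snd A y.

Definition regular {S : Type} (mul : S -> S -> S) : Prop :=
  forall a, exists x, a = mul (mul a x) a.

(* The IF point x_(a,b): value (a,b) at x and (0,1) elsewhere.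
   Points are IF subsets, so all x_(0,1) coincide as in the paper. *)
Definition ifpoint {S : Type} (x : S) (a b : R) : IFset S :=
  (fun y => if excluded_middle_informative (y = x) then a else 0,
   fun y => if excluded_middle_informative (y = x) then b else 1).

Definition valid_pair (a b : R) : Prop :=
  0 <= a <= 1 /\ 0 <= b <= 1 /\ a + b <= 1.

Definition IFpointset (S : Type) : Type := IFset S -> Prop.

Definition all_points {S : Type} : IFpointset S :=
  fun P => exists x a b, valid_pair a b /\ P = ifpoint x a b.

Definition points_of {S : Type} (A : IFset S) : IFpointset S :=
  fun P => exists x a b, valid_pair a b /\ P = ifpoint x a b /\
                         fst A x >= a /\ snd A x <= b.

Definition point_mul {S : Type} (mul : S -> S -> S) (P Q Rr : IFset S) : Prop :=
  exists x a b y c d,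
    valid_pair a b /\ valid_pair c d /\
    P = ifpoint x a b /\ Q = ifpoint y c d /\
    Rr = ifpoint (mul x y) (Rmin a c) (Rmax b d).

Definition set_comp {S : Type} (mul : S -> S -> S) (X Y : IFpointset S) : IFpointset S :=
  fun Rr => exists P Q, X P /\ Y Q /\ point_mul mul P Q Rr.

Definition set_inter {S : Type} (X Y : IFpointset S) : IFpointset S :=
  fun P => X P /\ Y P.

Definition set_eq {S : Type} (X Y : IFpointset S) : Prop :=
  forall P, X P <-> Y P.

(* If a = a t a, then every point a_(α,β) lying in both B and A factors as
   a_(α,β) ∘ (t a)_(α,β), and (t a)_(α,β) lies in A because A is a left ideal;
   conversely a product x_(α,β) ∘ y_(γ,δ) of points of B and A lies in both,
   since B(xy) dominates B(x) and A(xy) dominates A(y).  For the other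
   implication, take for A and B the characteristic IF sets of the principal
   ideals S¹a and aS¹: the point a_(1,0) lies in both, so a = x y with
   x ∈ aS¹ and y ∈ S¹a, which puts a in aSa. *)

From Stdlib Require Import Reals Lra ClassicalEpsilon.
Open Scope R_scope.

Lemma ifpoint_inj {S : Type} (x x' : S) a b a' b' :
  ifpoint x a b = ifpoint x' a' b' ->
  (x = x' /\ a = a' /\ b = b') \/ (a = 0 /\ b = 1).
Proof.
  intros E.
  assert (Emu := f_equal (fun P => fst P x) E).
  assert (Enu := f_equal (fun P => snd P x) E).
  unfold ifpoint in Emu, Enu; simpl in Emu, Enu.
  destruct (excluded_middle_informative (x = x)) as [_ | n]; [| congruence].
  destruct (excluded_middle_informative (x = x')); [left | right]; auto.
Qed.

Lemma valid_pair_min_max a b c d :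
  valid_pair a b -> valid_pair c d -> valid_pair (Rmin a c) (Rmax b d).
Proof.
  unfold valid_pair, Rmin, Rmax; intros.
  destruct (Rle_dec a c), (Rle_dec b d); lra.
Qed.

Lemma points_of_ifpoint {S : Type} (A : IFset S) (x : S) a b :
  is_IFsubset A -> points_of A (ifpoint x a b) -> fst A x >= a /\ snd A x <= b.
Proof.
  intros HA [x' [a' [b' [_ [E [Hmu Hnu]]]]]].
  destruct (ifpoint_inj _ _ _ _ _ _ E) as [[-> [-> ->]] | [-> ->]]; [auto |].
  destruct (HA x) as [? [? _]]; lra.
Qed.

Lemma set_comp_points_inv {S : Type} (mul : S -> S -> S) (A B : IFset S) P :
  is_IFsubset A -> is_IFsubset B ->
  set_comp mul (points_of B) (points_of A) P ->
  exists x a b y c d,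
    valid_pair a b /\ valid_pair c d /\
    fst B x >= a /\ snd B x <= b /\ fst A y >= c /\ snd A y <= d /\
    P = ifpoint (mul x y) (Rmin a c) (Rmax b d).
Proof.
  intros HA HB [Q1 [Q2 [HQ1 [HQ2 [x [a [b [y [c [d [Hab [Hcd [-> [-> ->]]]]]]]]]]]]]].
  destruct (points_of_ifpoint B x a b HB HQ1).
  destruct (points_of_ifpoint A y c d HA HQ2).
  exists x, a, b, y, c, d; auto 10.
Qed.

Section Ideals.

Context {S : Type} (mul : S -> S -> S) (A B : IFset S).
Hypotheses (HA : is_IFsubset A) (HLA : IF_left_ideal mul A).
Hypotheses (HB : is_IFsubset B) (HRB : IF_right_ideal mul B).

Lemma points_comp_sub_inter P :
  set_comp mul (points_of B) (points_of A) P ->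
  set_inter (points_of B) (points_of A) P.
Proof.
  intros Hcomp.
  destruct (set_comp_points_inv mul A B P HA HB Hcomp)
    as [x [a [b [y [c [d [Hab [Hcd [HBmu [HBnu [HAmu [HAnu ->]]]]]]]]]]]].
  pose proof (Rmin_l a c); pose proof (Rmin_r a c).
  pose proof (Rmax_l b d); pose proof (Rmax_r b d).
  destruct (HRB x y), (HLA x y).
  split; exists (mul x y), (Rmin a c), (Rmax b d);
    (split; [apply valid_pair_min_max; assumption | split; [reflexivity | lra]]).
Qed.

Hypothesis assoc : forall x y z, mul x (mul y z) = mul (mul x y) z.
Hypothesis Hreg : regular mul.

Lemma points_inter_sub_comp P :
  set_inter (points_of B) (points_of A) P ->
  set_comp mul (points_of B) (points_of A) P.
Proof.
  intros [[x [a [b [Hab [-> HBx]]]]] HAx].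
  destruct (points_of_ifpoint A x a b HA HAx) as [HAmu HAnu].
  destruct (Hreg x) as [t Ht].
  destruct (HLA t x).
  exists (ifpoint x a b), (ifpoint (mul t x) a b); split; [| split].
  - exists x, a, b; auto.
  - exists (mul t x), a, b; split; [exact Hab | split; [reflexivity | lra]].
  - exists x, a, b, (mul t x), a, b.
    do 4 (split; [first [exact Hab | reflexivity] |]).
    rewrite assoc, <- Ht, Rmin_left, Rmax_left by lra; reflexivity.
Qed.

End Ideals.

Definition charset {S : Type} (P : S -> Prop) : IFset S :=
  (fun z => if excluded_middle_informative (P z) then 1 else 0,
   fun z => if excluded_middle_informative (P z) then 0 else 1).

Lemma charset_IFsubset {S : Type} (P : S -> Prop) : is_IFsubset (charset P).
Proof.
  intro z; unfold charset; simpl.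
  destruct (excluded_middle_informative (P z)); lra.
Qed.

Lemma charset_fst_pos {S : Type} (P : S -> Prop) z :
  0 < fst (charset P) z -> P z.
Proof.
  unfold charset; simpl.
  destruct (excluded_middle_informative (P z)); [auto | lra].
Qed.

Lemma charset_left_ideal {S : Type} (mul : S -> S -> S) (P : S -> Prop) :
  (forall x y, P y -> P (mul x y)) -> IF_left_ideal mul (charset P).
Proof.
  intros HP x y; unfold charset; simpl.
  destruct (excluded_middle_informative (P y)) as [Py | _];
  destruct (excluded_middle_informative (P (mul x y))) as [_ | nP];
    try lra.
  exfalso; exact (nP (HP x y Py)).
Qed.

Lemma charset_right_ideal {S : Type} (mul : S -> S -> S) (P : S -> Prop) :
  (forall x y, P x -> P (mul x y)) -> IF_right_ideal mul (charset P).
Proof.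
  intros HP x y; unfold charset; simpl.
  destruct (excluded_middle_informative (P x)) as [Px | _];
  destruct (excluded_middle_informative (P (mul x y))) as [_ | nP];
    try lra.
  exfalso; exact (nP (HP x y Px)).
Qed.

Lemma charset_points_of {S : Type} (P : S -> Prop) x :
  P x -> points_of (charset P) (ifpoint x 1 0).
Proof.
  intros Px; exists x, 1, 0.
  unfold valid_pair, charset; simpl.
  destruct (excluded_middle_informative (P x)); [| contradiction].
  repeat split; lra.
Qed.

Lemma charset_comp_ifpoint {S : Type} (mul : S -> S -> S) (L R : S -> Prop) a :
  set_comp mul (points_of (charset R)) (points_of (charset L)) (ifpoint a 1 0) ->
  exists x y, R x /\ L y /\ a = mul x y.
Proof.
  intros Hcomp.
  destruct (set_comp_points_inv mul _ _ _ (charset_IFsubset L) (charset_IFsubset R) Hcomp)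
    as [x [c1 [d1 [y [c [d [Hv1 [Hv [HRx [_ [HLy [_ E]]]]]]]]]]]].
  destruct (ifpoint_inj _ _ _ _ _ _ E) as [[Ea [Emin _]] | [? _]]; [| lra].
  pose proof (Rmin_l c1 c); pose proof (Rmin_r c1 c).
  exists x, y; split; [| split]; [apply charset_fst_pos; lra .. | exact Ea].
Qed.

Section Principal.

Context {S : Type} (mul : S -> S -> S).
Hypothesis assoc : forall x y z, mul x (mul y z) = mul (mul x y) z.

Definition left_principal (a z : S) : Prop := z = a \/ exists t, z = mul t a.
Definition right_principal (a z : S) : Prop := z = a \/ exists s, z = mul a s.

Lemma left_principal_closed a x y :
  left_principal a y -> left_principal a (mul x y).
Proof.
  intros [-> | [t ->]]; right; [exists x | exists (mul x t)]; auto.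
Qed.

Lemma right_principal_closed a x y :
  right_principal a x -> right_principal a (mul x y).
Proof.
  intros [-> | [s ->]]; right; [exists y | exists (mul s y)]; auto.
Qed.

Lemma regular_elem_of_principal_mul a x y :
  right_principal a x -> left_principal a y -> a = mul x y ->
  exists t, a = mul (mul a t) a.
Proof.
  intros [-> | [s ->]] [-> | [t ->]] Ea.
  - exists a; rewrite <- Ea at 1; exact Ea.
  - exists t; rewrite Ea at 1; apply assoc.
  - exists s; exact Ea.
  - exists (mul s t); rewrite Ea at 1; rewrite !assoc; reflexivity.
Qed.

End Principal.

Theorem theorem3p15 (S : Type) (mul : S -> S -> S)
  (assoc : forall x y z, mul x (mul y z) = mul (mul x y) z) :
  regular mul <->
  (forall A B : IFset S,
     is_IFsubset A -> IF_left_ideal mul A ->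
     is_IFsubset B -> IF_right_ideal mul B ->
     set_eq (set_inter (points_of B) (points_of A))
            (set_comp mul (points_of B) (points_of A))).
Proof.
  split.
  - intros Hreg A B HA HLA HB HRB P; split.
    + apply points_inter_sub_comp; assumption.
    + apply points_comp_sub_inter; assumption.
  - intros H a.
    set (L := left_principal mul a); set (R := right_principal mul a).
    assert (Hin : set_inter (points_of (charset R)) (points_of (charset L))
                    (ifpoint a 1 0)).
    { split; apply charset_points_of; left; reflexivity. }
    apply (H _ _ (charset_IFsubset L)
             (charset_left_ideal mul L (left_principal_closed mul assoc a))
             (charset_IFsubset R)
             (charset_right_ideal mul R (right_principal_closed mul assoc a))) in Hin.
    destruct (charset_comp_ifpoint mul L R a Hin) as [x [y [Rx [Ly Ea]]]].
    exact (regular_elem_of_principal_mul mul assoc a x y Rx Ly Ea).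
Qed.
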